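(* Let $J$ be an ideal of $\widetilde{\mathbb{K}}_{sm}$ and $x\in J$. Then $|x|\in J$.
   Context: Let $I=(0,1]$ and $\mathbb{K}\in\{\mathbb{R},\mathbb{C}\}$. $\widetilde{\mathbb{K}}_{sm}=\mathcal{E}_{M,sm}/\mathcal{N}_{sm}$ where $\mathcal{E}_{M,sm}$ is the set of nets $(r_\varepsilon)_{\varepsilon\in I}\in\mathbb{K}^I$ smooth in $\varepsilon$ with $|r_\varepsilon|=O(\varepsilon^{-N})$ for some $N$, and $\mathcal{N}_{sm}$ those with $|r_\varepsilon|=O(\varepsilon^m)$ for all $m$; $\widetilde{\mathbb{K}}_{co}$ is defined analogously with continuous nets, and $\tau_{sm}:\widetilde{\mathbb{K}}_{sm}\to\widetilde{\mathbb{K}}_{co}$, $[(r_\varepsilon)]\mapsto[(r_\varepsilon)]$, is a ring isomorphism. For $x=[(x_\varepsilon)_\varepsilon]\in\widetilde{\mathbb{K}}_{sm}$, $|x|:=\tau_{sm}^{-1}([(|x_\varepsilon|)_\varepsilon])$. *)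

From Stdlib Require Import Reals.
From Coquelicot Require Import Coquelicot.
Open Scope R_scope.

(* A net (r_eps)_{eps in I}, I = (0,1], with values in K.  Both K = R and K = C are
   handled uniformly: values are taken in C, and when [isR = true] (K = R) the net is
   required to be real-valued on I.  Values outside I are irrelevant. *)
Definition net := R -> C.

Definition inI (e : R) : Prop := 0 < e <= 1.

Definition inK (isR : bool) (z : C) : Prop := isR = true -> Im z = 0.

Definition smooth_on_I (f : R -> R) : Prop :=
  exists (g : R -> R) (d : R), 0 < d /\
    (forall e, inI e -> g e = f e) /\
    (forall (n : nat) (x : R), 0 < x < 1 + d -> ex_derive_n g n x).

Definition smooth_net (isR : bool) (r : net) : Prop :=
  (forall e, inI e -> inK isR (r e)) /\
  smooth_on_I (fun e => Re (r e)) /\ smooth_on_I (fun e => Im (r e)).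

Definition moderate (r : net) : Prop :=
  exists (N : nat) (c eta : R), 0 < eta <= 1 /\
    forall e, 0 < e <= eta -> Cmod (r e) <= c * / (e ^ N).

Definition negligible (r : net) : Prop :=
  forall m : nat, exists (c eta : R), 0 < eta <= 1 /\
    forall e, 0 < e <= eta -> Cmod (r e) <= c * e ^ m.

Definition EMsm (isR : bool) (r : net) : Prop := smooth_net isR r /\ moderate r.

Definition Nsm (isR : bool) (r : net) : Prop := EMsm isR r /\ negligible r.

Definition net0 : net := fun _ => RtoC 0.
Definition net_add (r s : net) : net := fun e => Cplus (r e) (s e).
Definition net_opp (r : net) : net := fun e => Copp (r e).
Definition net_mul (r s : net) : net := fun e => Cmult (r e) (s e).
Definition net_sub (r s : net) : net := fun e => Cminus (r e) (s e).

(* Two representatives define the same element of K~_sm = E_{M,sm}/N_sm. *)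
Definition sm_equiv (isR : bool) (r s : net) : Prop :=
  EMsm isR r /\ EMsm isR s /\ negligible (net_sub r s).

(* A subset of K~_sm is represented by the set of all representatives of its
   elements, i.e. a subset of E_{M,sm} saturated w.r.t. N_sm. *)
Record is_ideal_Ksm (isR : bool) (J : net -> Prop) : Prop := {
  ideal_repr : forall r, J r -> EMsm isR r;
  ideal_sat  : forall r s, J r -> sm_equiv isR r s -> J s;
  ideal_0    : J net0;
  ideal_add  : forall r s, J r -> J s -> J (net_add r s);
  ideal_opp  : forall r, J r -> J (net_opp r);
  ideal_mul  : forall a r, EMsm isR a -> J r -> J (net_mul a r)
}.

(* s is a representative of |x| := tau_sm^{-1}([(|x_eps|)_eps]) : s is a smooth
   moderate net whose class in K~_co equals that of the continuous net (|x_eps|). *)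
Definition repr_abs (isR : bool) (x s : net) : Prop :=
  EMsm isR s /\ negligible (fun e => Cminus (s e) (RtoC (Cmod (x e)))).

From Stdlib Require Import Reals Lra Lia.
From Coquelicot Require Import Coquelicot.

(* For x in J, multiply x by the smooth bounded net
     a_eps = conj(x_eps) / sqrt(|x_eps|^2 + exp(-1/eps)^2).
   Then a x = |x|^2 / sqrt(|x|^2 + exp(-1/eps)^2) lies in J, and it differs from
   |x| by at most exp(-1/eps), which is negligible.  Hence every representative of
   |x| is equivalent to a x, so it lies in J by saturation. *)

(** * Finitely differentiable functions on an open set *)

Fixpoint Cn_on (U : R -> Prop) (n : nat) (f : R -> R) : Prop :=
  match n with
  | O => True
  | S n => (forall x, U x -> ex_derive f x) /\ Cn_on U n (Derive f)
  end.

Lemma Cn_on_weaken U n f : Cn_on U (S n) f -> Cn_on U n f.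
Proof.
revert f; induction n as [|n IH]; intros f Hf; simpl in *; [easy|].
destruct Hf as [Hd Hn]; split; auto.
Qed.

Lemma Cn_on_subset U V n f :
  (forall x, U x -> V x) -> Cn_on V n f -> Cn_on U n f.
Proof.
intros HUV; revert f; induction n as [|n IH]; intros f Hf; simpl in *; [easy|].
destruct Hf as [Hd Hn]; split; auto.
Qed.

Section CnOpen.

Variable U : R -> Prop.
Hypothesis U_open : open U.

Lemma Cn_on_ext n f g : (forall x, U x -> f x = g x) -> Cn_on U n f -> Cn_on U n g.
Proof.
revert f g; induction n as [|n IH]; intros f g Hfg Hf; simpl in *; [easy|].
destruct Hf as [Hd Hn].
assert (Hloc : forall x, U x -> locally x (fun t => f t = g t)).
{ intros x Hx; apply (filter_imp U); [exact Hfg | exact (U_open x Hx)]. }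
split.
- intros x Hx; apply (ex_derive_ext_loc f g); auto.
- apply (IH (Derive f)); auto.
  intros x Hx; apply Derive_ext_loc; auto.
Qed.

Lemma Cn_on_const n c : Cn_on U n (fun _ => c).
Proof.
revert c; induction n as [|n IH]; intros c; simpl; [easy|]; split.
- intros; apply ex_derive_const.
- apply (Cn_on_ext n (fun _ => 0)); auto.
  intros x _; symmetry; apply Derive_const.
Qed.

Lemma Cn_on_id n : Cn_on U n (fun x => x).
Proof.
destruct n as [|n]; simpl; [easy|]; split.
- intros; apply ex_derive_id.
- apply (Cn_on_ext n (fun _ => 1)); [|apply Cn_on_const].
  intros x _; symmetry; apply Derive_id.
Qed.

Lemma Cn_on_plus n f g :
  Cn_on U n f -> Cn_on U n g -> Cn_on U n (fun x => f x + g x).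
Proof.
revert f g; induction n as [|n IH]; intros f g Hf Hg; simpl in *; [easy|].
destruct Hf as [Fd Fn], Hg as [Gd Gn]; split.
- intros x Hx; exact (ex_derive_plus f g x (Fd x Hx) (Gd x Hx)).
- apply (Cn_on_ext n (fun x => Derive f x + Derive g x)); auto.
  intros x Hx; symmetry; apply Derive_plus; auto.
Qed.

Lemma Cn_on_opp n f : Cn_on U n f -> Cn_on U n (fun x => - f x).
Proof.
revert f; induction n as [|n IH]; intros f Hf; simpl in *; [easy|].
destruct Hf as [Fd Fn]; split.
- intros x Hx; exact (ex_derive_opp f x (Fd x Hx)).
- apply (Cn_on_ext n (fun x => - Derive f x)); auto.
  intros x _; symmetry; apply Derive_opp.
Qed.

Lemma Cn_on_mult n f g :
  Cn_on U n f -> Cn_on U n g -> Cn_on U n (fun x => f x * g x).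
Proof.
revert f g; induction n as [|n IH]; intros f g Hf Hg; [easy|].
pose proof (Cn_on_weaken _ _ _ Hf) as Hf'; pose proof (Cn_on_weaken _ _ _ Hg) as Hg'.
destruct Hf as [Fd Fn], Hg as [Gd Gn]; split.
- intros x Hx; exact (ex_derive_mult f g x (Fd x Hx) (Gd x Hx)).
- apply (Cn_on_ext n (fun x => Derive f x * g x + f x * Derive g x)).
  + intros x Hx; symmetry; apply Derive_mult; auto.
  + apply Cn_on_plus; apply IH; auto.
Qed.

Lemma Cn_on_sqr n f : Cn_on U n f -> Cn_on U n (fun x => f x ^ 2).
Proof.
intros Hf; apply (Cn_on_ext n (fun x => f x * f x)); [intros; ring|].
apply Cn_on_mult; auto.
Qed.

Lemma Cn_on_inv n f :
  (forall x, U x -> f x <> 0) -> Cn_on U n f -> Cn_on U n (fun x => / f x).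
Proof.
intros Hnz; revert f Hnz; induction n as [|n IH]; intros f Hnz Hf; [easy|].
pose proof (Cn_on_weaken _ _ _ Hf) as Hf'.
destruct Hf as [Fd Fn]; split.
- intros x Hx; destruct (Fd x Hx) as [l Hl].
  eexists; apply is_derive_inv; eauto.
- apply (Cn_on_ext n (fun x => - Derive f x * (/ f x * / f x))).
  + intros x Hx; symmetry; apply is_derive_unique.
    destruct (Fd x Hx) as [l Hl].
    rewrite (is_derive_unique _ _ _ Hl).
    replace (- l * (/ f x * / f x)) with (- l / f x ^ 2) by (field; auto).
    apply is_derive_inv; auto.
  + apply Cn_on_mult; [apply Cn_on_opp; auto|].
    apply Cn_on_mult; apply IH; auto.
Qed.

End CnOpen.

Lemma Cn_on_comp V U n g f :
  open U -> Cn_on V n g -> Cn_on U n f -> (forall x, U x -> V (f x)) ->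
  Cn_on U n (fun x => g (f x)).
Proof.
intros HU; revert g f; induction n as [|n IH]; intros g f Hg Hf Hfg; [easy|].
pose proof (Cn_on_weaken _ _ _ Hf) as Hf'.
destruct Hf as [Fd Fn], Hg as [Gd Gn]; split.
- intros x Hx; exact (ex_derive_comp g f x (Gd _ (Hfg x Hx)) (Fd x Hx)).
- apply (Cn_on_ext U HU n (fun x => Derive g (f x) * Derive f x)).
  + intros x Hx; symmetry; rewrite Rmult_comm; apply Derive_comp; auto.
  + apply Cn_on_mult; auto.
Qed.

Lemma Cn_on_exp n : Cn_on (fun _ => True) n exp.
Proof.
induction n as [|n IH]; simpl; [easy|]; split.
- intros x _; eexists; apply is_derive_exp.
- apply (Cn_on_ext _ open_true n exp); auto.
  intros x _; symmetry; apply is_derive_unique, is_derive_exp.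
Qed.

Lemma Cn_on_sqrt n : Cn_on (fun x => 0 < x) n sqrt.
Proof.
assert (Hpos : open (fun x : R => 0 < x)) by apply open_gt.
induction n as [|n IH]; simpl; [easy|]; split.
- intros x Hx; eexists; apply (is_derive_sqrt (fun t => t) x 1); auto.
  apply (@is_derive_id R_AbsRing).
- apply (Cn_on_ext _ Hpos n (fun x => / (2 * sqrt x))).
  + intros x Hx; symmetry; apply is_derive_unique.
    pose proof (sqrt_lt_R0 x Hx).
    replace (/ (2 * sqrt x)) with (1 / (2 * sqrt x)) by (field; lra).
    apply (is_derive_sqrt (fun t => t) x 1); auto.
    apply (@is_derive_id R_AbsRing).
  + apply Cn_on_inv; auto.
    * intros x Hx; pose proof (sqrt_lt_R0 x Hx); lra.
    * apply Cn_on_mult; auto; apply Cn_on_const; auto.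
Qed.

Lemma Derive_n_Derive f k x : Derive_n (Derive f) k x = Derive_n f (S k) x.
Proof.
revert x; induction k as [|k IH]; intros x; simpl; [easy|].
apply Derive_ext; intros t; apply IH.
Qed.

Lemma Cn_on_all_n U f :
  (forall k x, U x -> ex_derive_n f k x) <-> (forall n, Cn_on U n f).
Proof.
split.
- intros H n; revert f H; induction n as [|n IH]; intros f H; simpl; [easy|]; split.
  + intros x Hx; exact (H 1%nat x Hx).
  + apply IH; intros [|k] x Hx; simpl; [easy|].
    apply (ex_derive_ext (Derive_n f (S k))); [intros; symmetry; apply Derive_n_Derive|].
    exact (H (S (S k)) x Hx).
- intros H [|k] x Hx; [easy|]; specialize (H (S k)); revert f H.
  induction k as [|k IH]; intros f Hf; [apply Hf; auto|].
  destruct Hf as [_ Hf].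
  apply (ex_derive_ext (Derive_n (Derive f) k)); [intros; apply Derive_n_Derive|].
  exact (IH (Derive f) Hf).
Qed.

Definition I_ext (d : R) (t : R) : Prop := 0 < t < 1 + d.

Lemma open_I_ext d : open (I_ext d).
Proof. apply open_and; [apply open_gt | apply open_lt]. Qed.

Lemma smooth_on_I_Cn_on f :
  smooth_on_I f <->
  exists g d, 0 < d /\ (forall e, inI e -> g e = f e) /\
              (forall n, Cn_on (I_ext d) n g).
Proof.
split; intros [g [d [Hd [Hgf Hg]]]]; exists g, d; repeat split; auto.
- apply Cn_on_all_n; intros k t Ht; apply Hg, Ht.
- intros n t Ht; apply (proj2 (Cn_on_all_n _ _) Hg); exact Ht.
Qed.

Lemma smooth_on_I_comp2 (F : R -> R -> R -> R) f1 f2 :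
  (forall U n g1 g2, open U -> (forall t, U t -> 0 < t) ->
     Cn_on U n g1 -> Cn_on U n g2 -> Cn_on U n (fun t => F t (g1 t) (g2 t))) ->
  smooth_on_I f1 -> smooth_on_I f2 -> smooth_on_I (fun e => F e (f1 e) (f2 e)).
Proof.
intros HF [g1 [d1 [Hd1 H1]]]%smooth_on_I_Cn_on [g2 [d2 [Hd2 H2]]]%smooth_on_I_Cn_on.
apply smooth_on_I_Cn_on.
set (d := Rmin d1 d2).
assert (Hsub : forall di, d <= di -> forall t, I_ext d t -> I_ext di t)
  by (unfold I_ext; intros; lra).
exists (fun t => F t (g1 t) (g2 t)), d; repeat split.
- apply Rmin_glb_lt; auto.
- intros e He; rewrite (proj1 H1 e He), (proj1 H2 e He); auto.
- intros n; apply HF.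
  + apply open_I_ext.
  + intros t Ht; apply Ht.
  + apply (Cn_on_subset _ (I_ext d1)); [apply Hsub, Rmin_l | apply H1].
  + apply (Cn_on_subset _ (I_ext d2)); [apply Hsub, Rmin_r | apply H2].
Qed.

(** * The damped conjugate of a net *)

Definition reg_norm (e a b : R) : R := sqrt (a ^ 2 + b ^ 2 + exp (- / e) ^ 2).

Definition damped_conj (x : net) : net := fun e =>
  (Re (x e) / reg_norm e (Re (x e)) (Im (x e)),
   - Im (x e) / reg_norm e (Re (x e)) (Im (x e))).

Lemma reg_norm_pos e a b : 0 < reg_norm e a b.
Proof.
apply sqrt_lt_R0; pose proof (exp_pos (- / e)); nra.
Qed.

Lemma reg_norm_sqr e a b : reg_norm e a b ^ 2 = a ^ 2 + b ^ 2 + exp (- / e) ^ 2.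
Proof.
apply pow2_sqrt; pose proof (exp_pos (- / e)); nra.
Qed.

Lemma Cn_on_inv_reg_norm U n g1 g2 :
  open U -> (forall t, U t -> 0 < t) -> Cn_on U n g1 -> Cn_on U n g2 ->
  Cn_on U n (fun t => / reg_norm t (g1 t) (g2 t)).
Proof.
intros HU Hpos H1 H2.
apply Cn_on_inv; auto.
- intros t _; apply Rgt_not_eq, reg_norm_pos.
- apply (Cn_on_comp (fun y => 0 < y)); auto using Cn_on_sqrt.
  + apply Cn_on_plus; auto; [apply Cn_on_plus; auto; apply Cn_on_sqr; auto|].
    apply Cn_on_sqr; auto.
    apply (Cn_on_comp (fun _ => True)); auto using Cn_on_exp.
    apply Cn_on_opp, Cn_on_inv; auto using Cn_on_id.
    intros t Ht; specialize (Hpos t Ht); lra.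
  + intros t _; pose proof (exp_pos (- / t)); nra.
Qed.

Lemma Cmod_damped_conj_le_1 x e : Cmod (damped_conj x e) <= 1.
Proof.
rewrite <- sqrt_1; apply sqrt_le_1_alt.
unfold damped_conj; simpl fst; simpl snd.
set (a := Re (x e)); set (b := Im (x e)).
pose proof (reg_norm_pos e a b) as Hw; pose proof (reg_norm_sqr e a b) as Hw2.
pose proof (exp_pos (- / e)).
replace ((a / reg_norm e a b) ^ 2 + (- b / reg_norm e a b) ^ 2)
  with ((a ^ 2 + b ^ 2) / reg_norm e a b ^ 2) by (field; lra).
apply Rcomplements.Rle_div_l; nra.
Qed.

Lemma damped_conj_EMsm isR x : EMsm isR x -> EMsm isR (damped_conj x).
Proof.
intros [[HK [Hre Him]] _]; split; [split; [|split]|].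
- intros e He HR; simpl; rewrite (HK e He HR); field.
  apply Rgt_not_eq, reg_norm_pos.
- apply (smooth_on_I_comp2 (fun t a b => a / reg_norm t a b)); auto.
  intros; apply Cn_on_mult; auto using Cn_on_inv_reg_norm.
- apply (smooth_on_I_comp2 (fun t a b => - b / reg_norm t a b)); auto.
  intros; apply Cn_on_mult; auto using Cn_on_inv_reg_norm, Cn_on_opp.
- exists 0%nat, 1, 1; split; [lra|]; intros e _.
  rewrite pow_O, Rinv_1, Rmult_1_r; apply Cmod_damped_conj_le_1.
Qed.

Lemma damped_conj_mul x e :
  net_mul (damped_conj x) x e =
  RtoC (Cmod (x e) ^ 2 / reg_norm e (Re (x e)) (Im (x e))).
Proof.
pose proof (reg_norm_pos e (Re (x e)) (Im (x e))).
rewrite Cmod2_alt; unfold net_mul, damped_conj, Cmult, RtoC; simpl.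
unfold Re, Im in *; f_equal; field; lra.
Qed.

(** * Negligible nets *)

Lemma negligible_le (f g h : net) :
  negligible f -> negligible g ->
  (forall e, inI e -> Cmod (h e) <= Cmod (f e) + Cmod (g e)) -> negligible h.
Proof.
intros Hf Hg H m.
destruct (Hf m) as [c1 [eta1 [He1 H1]]], (Hg m) as [c2 [eta2 [He2 H2]]].
pose proof (Rmin_l eta1 eta2); pose proof (Rmin_r eta1 eta2).
exists (c1 + c2), (Rmin eta1 eta2); split.
- split; [apply Rmin_glb_lt|]; lra.
- intros e He; eapply Rle_trans; [apply H; unfold inI; lra|].
  rewrite Rmult_plus_distr_r; apply Rplus_le_compat; [apply H1 | apply H2]; lra.
Qed.

Lemma negligible_sub_trans (r s t : net) :
  negligible (net_sub r t) -> negligible (net_sub s t) -> negligible (net_sub r s).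
Proof.
intros Hrt Hst; apply (negligible_le _ _ _ Hrt Hst); intros e _.
unfold net_sub; rewrite <- (Cmod_opp (Cminus (s e) (t e))).
replace (Cminus (r e) (s e)) with (Cplus (Cminus (r e) (t e)) (Copp (Cminus (s e) (t e))))
  by (apply injective_projections; simpl; ring).
apply Cmod_triangle.
Qed.

Lemma exp_neg_inv_le_pow (m : nat) :
  exists c, forall e, inI e -> exp (- / e) <= c * e ^ m.
Proof.
set (k := INR (S m)).
assert (Hk : 0 < k) by (apply lt_0_INR; lia).
exists (k ^ S m); intros e [He0 He1].
assert (Hz : 0 < / e / k) by (apply Rdiv_lt_0_compat; [apply Rinv_0_lt_compat|]; lra).
(* exp (1/e) = exp (1/(k e)) ^ (m+1) >= (1/(k e)) ^ (m+1), since exp y >= y *)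
assert (Hexp : (/ e / k) ^ S m <= exp (/ e)).
{ replace (/ e) with (INR (S m) * (/ e / k)) at 2 by (fold k; field; lra).
  replace (exp (INR (S m) * (/ e / k))) with (Rpower (exp (/ e / k)) (INR (S m)))
    by (unfold Rpower; rewrite ln_exp; reflexivity).
  rewrite Rpower_pow by apply exp_pos.
  apply pow_incr; pose proof (exp_ineq1 (/ e / k)); lra. }
assert (Hem : e ^ S m <= e ^ m).
{ simpl; rewrite <- (Rmult_1_l (e ^ m)) at 2.
  apply Rmult_le_compat_r; [apply pow_le|]; lra. }
rewrite exp_Ropp.
apply Rle_trans with (/ ((/ e / k) ^ S m)); [apply Rinv_le_contravar; auto; apply pow_lt; lra|].
rewrite <- pow_inv.
replace (/ (/ e / k)) with (k * e) by (field; lra).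
rewrite Rpow_mult_distr; apply Rmult_le_compat_l; [apply pow_le; lra | easy].
Qed.

Lemma Rabs_sqr_div_sub_le v t w :
  0 <= v -> 0 <= t -> 0 < w -> w ^ 2 = v ^ 2 + t ^ 2 -> Rabs (v ^ 2 / w - v) <= t.
Proof.
intros Hv Ht Hw Hw2.
assert (Hvw : v <= w) by nra.
assert (Hwvt : w <= v + t) by nra.
replace (v ^ 2 / w - v) with (v * (v - w) / w) by (field; lra).
apply Rabs_le; split.
- apply Rcomplements.Rle_div_r; nra.
- apply Rcomplements.Rle_div_l; nra.
Qed.

Lemma negligible_damped_conj_mul_sub_abs x :
  negligible (net_sub (net_mul (damped_conj x) x) (fun e => RtoC (Cmod (x e)))).
Proof.
intros m; destruct (exp_neg_inv_le_pow m) as [c Hc].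
exists c, 1; split; [lra|]; intros e He.
unfold net_sub; rewrite damped_conj_mul, <- RtoC_minus, Cmod_R.
eapply Rle_trans; [|apply (Hc e He)].
apply Rabs_sqr_div_sub_le.
- apply Cmod_ge_0.
- apply Rlt_le, exp_pos.
- apply reg_norm_pos.
- rewrite reg_norm_sqr, Cmod2_alt; ring.
Qed.

Theorem lemma4p24 (isR : bool) (J : net -> Prop) (HJ : is_ideal_Ksm isR J)
  (x : net) (Hx : J x) :
  forall s : net, repr_abs isR x s -> J s.
Proof.
intros s [Hs Hs_abs].
assert (HxE : EMsm isR x) by exact (ideal_repr _ _ HJ x Hx).
assert (Hax : J (net_mul (damped_conj x) x))
  by exact (ideal_mul _ _ HJ _ _ (damped_conj_EMsm isR x HxE) Hx).
apply (ideal_sat _ _ HJ _ _ Hax); split; [|split].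
- exact (ideal_repr _ _ HJ _ Hax).
- exact Hs.
- apply (negligible_sub_trans _ _ (fun e => RtoC (Cmod (x e)))).
  + apply negligible_damped_conj_mul_sub_abs.
  + exact Hs_abs.
Qed.
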